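(* For every set $S$ of $\omega$-sharing groups and every idempotent substitution $\theta$, and for every order in which the bindings of $\theta$ are processed in the definition of $\mathrm{mgu}_\omega$, we have $\mathrm{mgu}_\omega(S,\theta)=\mathrm{mgu_p}(S,\theta)$. In other words, sequential (one binding at a time) abstract unification coincides with parallel abstract unification.
   Context: Fix a first-order signature and a denumerable set of variables $\mathcal V$. For a term $t$ and variable $v$, $\mathit{occ}(v,t)$ is the number of occurrences of $v$ in $t$. An $\omega$-sharing group is a multiset of variables with finite support, i.e. a function $B:\mathcal V\to\mathbb N$ that is nonzero on only finitely many variables; $\{\!\!\{\}\!\!\}$ is the empty multiset, and the sum of multisets is $(A\uplus B)(v)=A(v)+B(v)$. The multiplicity of an $\omega$-sharing group $B$ in a term $t$ is $\chi(B,t)=\sum_{v} B(v)\cdot\mathit{occ}(v,t)$. A multigraph $G=\langle N_G,E_G,\mathrm{src}_G,\mathrm{tgt}_G\rangle$ consists of a nonempty set of nodes $N_G$, a set of edges $E_G$, and functions $\mathrm{src}_G,\mathrm{tgt}_G:E_G\to N_G$ (multiple distinct edges, including self-loops, may join the same nodes). The out-degree (in-degree) of $n$ is the number of edges $e$ with $\mathrm{src}_G(e)=n$ (resp. $\mathrm{tgt}_G(e)=n$). A path between $n_1$ and $n_k$ is a nonempty sequence of nodes $n_1\dots n_k$ such that consecutive nodes are joined by an edge in either direction; $G$ is connected if every pair of nodes is joined by a path. A (parallel) sharing graph for a set $S$ of $\omega$-sharing groups and an idempotent substitution $\theta=\{x_1/t_1,\dots,x_p/t_p\}$ (with $p\ge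 0$) is a family $\mathcal G=\{G^i\}_{i\in[1,p]}$ of multigraphs over a common node set $N_{\mathcal G}$, with a labeling $l_{\mathcal G}:N_{\mathcal G}\to S$, such that: (i) for every node $n$ and every $i$, the out-degree of $n$ in $G^i$ equals $\chi(l_{\mathcal G}(n),x_i)$ and the in-degree of $n$ in $G^i$ equals $\chi(l_{\mathcal G}(n),t_i)$; (ii) the edge sets $E_{G^i}$ are pairwise disjoint; (iii) the flattening of $\mathcal G$, i.e. the multigraph with nodes $N_{\mathcal G}$, edges $\bigcup_i E_{G^i}$ and source/target inherited from the layers, is connected. The resultant $\omega$-sharing group is $\mathit{res}(\mathcal G)=\biguplus_{n\in N_{\mathcal G}} l_{\mathcal G}(n)$. The parallel abstract unification is $\mathrm{mgu_p}(S,\theta)=\{\mathit{res}(\mathcal G)\mid \mathcal G \text{ a sharing graph for } S \text{ and } \theta\}$. The sequential abstract unification $\mathrm{mgu}_\omega$ is defined recursively by $\mathrm{mgu}_\omega(S,\epsilon)=S$ (with $\epsilon$ the empty substitution) and $\mathrm{mgu}_\omega(S,\{x/t\}\cup\theta)=\mathrm{mgu}_\omega(\mathrm{mgu_p}(S,\{x/t\}),\theta)$, where $\{x/t\}\cup\theta$ is idempotent and $x\notin\mathrm{dom}(\theta)$. *)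

From Stdlib Require Import Relations.
From mathcomp Require Import all_boot.
Set Implicit Arguments. Unset Strict Implicit. Unset Printing Implicit Defensive.

Inductive term (F : Type) : Type :=
| Var of nat
| Fn of F & seq (term F).
Arguments Var {F} _.

Section Terms.
Variables (F : Type) (ar : F -> nat).

Fixpoint wf_term (t : term F) : bool :=
  match t with
  | Var _ => true
  | Fn f ts => (size ts == ar f) && all wf_term ts
  end.

Fixpoint occ (v : nat) (t : term F) : nat :=
  match t with
  | Var w => (w == v : nat)
  | Fn _ ts => sumn (map (occ v) ts)
  end.

Fixpoint vbound (t : term F) : nat :=
  match t with
  | Var w => w.+1
  | Fn _ ts => foldr maxn 0 (map vbound ts)
  end.
End Terms.

(* omega-sharing groups: multisets of variables, i.e. functions nat -> nat
   with finite support. Sets of them are predicates. *)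
Definition osg := nat -> nat.
Definition fin_supp (B : osg) : Prop := exists m, forall v, m <= v -> B v = 0.

(* chi(B,t) = sum_v B(v) * occ(v,t); terms with v >= vbound t vanish. *)
Definition chi (F : Type) (B : osg) (t : term F) : nat :=
  \sum_(v < vbound t) B v * occ v t.

(* substitutions as lists of bindings x/t (the list order is a processing order) *)
Definition subst (F : Type) := seq (nat * term F).

Definition bvar (F : Type) (th : subst F) (i : nat) : nat := (nth (0, Var 0) th i).1.
Definition bterm (F : Type) (th : subst F) (i : nat) : term F := (nth (0, Var 0) th i).2.

Definition idempotent_subst (F : Type) (th : subst F) : Prop :=
  uniq (map fst th) /\
  forall i j, i < size th -> j < size th -> occ (bvar th i) (bterm th j) = 0.

(* A (parallel) sharing graph for S and th with nodes 'I_n (a nonempty finite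
   node set), labeling l, and layers E i (i < p), each a finite list of edges
   (src, tgt); distinct list positions are distinct edges, and edges of
   different layers are distinct by construction (pairwise disjoint). *)
Definition sharing_graph (F : Type) (S : osg -> Prop) (th : subst F)
    (n : nat) (l : 'I_n -> osg) (E : 'I_(size th) -> seq ('I_n * 'I_n)) : Prop :=
  [/\ 0 < n,
      (forall k, S (l k)),
      (forall (i : 'I_(size th)) (k : 'I_n),
          count (fun e => e.1 == k) (E i) = chi (l k) (Var (bvar th i) : term F) /\
          count (fun e => e.2 == k) (E i) = chi (l k) (bterm th i)) &
      (forall a b : 'I_n,
          clos_refl_trans 'I_n
            (fun x y => exists i : 'I_(size th), ((x, y) \in E i) || ((y, x) \in E i))
            a b)].

Definition res (n : nat) (l : 'I_n -> osg) : osg := fun v => \sum_(k < n) l k v.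

Definition mgu_p (F : Type) (S : osg -> Prop) (th : subst F) : osg -> Prop :=
  fun B => exists n (l : 'I_n -> osg) (E : 'I_(size th) -> seq ('I_n * 'I_n)),
      @sharing_graph F S th n l E /\ B = @res n l.

Fixpoint mgu_omega (F : Type) (S : osg -> Prop) (th : subst F) : osg -> Prop :=
  match th with
  | [::] => S
  | b :: th' => mgu_omega (mgu_p S [:: b]) th'
  end.

From Stdlib Require Import Relations IndefiniteDescription FunctionalExtensionality.
From mathcomp Require Import all_boot.
Set Implicit Arguments. Unset Strict Implicit. Unset Printing Implicit Defensive.

(* Everything rests on the composition law  mgu_p_cons :
     mgu_p S (b :: th) = mgu_p (mgu_p S [:: b]) th,
   from which the theorem follows by induction on the list of bindings, the
   empty case being  mgu_p S [::] = S  (a connected graph without edges has a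
   single node).  The composition law is proved by two graph constructions,
   after allowing sharing graphs over an arbitrary finite type of nodes:
   - collapse: in a sharing graph for b :: th, each connected component of the
     layer of b is a sharing graph for [:: b]; contracting the components
     gives a sharing graph for th over groups of mgu_p S [:: b];
   - expand: conversely, replace each node of a sharing graph for th over
     mgu_p S [:: b] by a sharing graph for [:: b] producing its label, and
     distribute each edge of the other layers to nodes of the expanded graph
     with the right degrees (a counting argument on multisets of endpoints). *)

Lemma chi_sum F (I : finType) (P : pred I) (f : I -> osg) (t : term F) :
  chi (fun v => \sum_(k | P k) f k v) t = \sum_(k | P k) chi (f k) t.
Proof.
rewrite /chi -exchange_big /=; apply: eq_bigr => v _.
by rewrite big_distrl.
Qed.

Lemma count_pmap (A B : Type) (g : A -> option B) (p : pred B) s :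
  count p (pmap g s) = count (fun x => oapp p false (g x)) s.
Proof. by elim: s => //= x s IH; case: (g x) => [y|] /=; rewrite IH. Qed.

Lemma count_fibers (A : Type) (T : finType) (f : A -> T) (P : pred T) s :
  count (fun a => P (f a)) s = \sum_(x | P x) count (fun a => f a == x) s.
Proof.
elim: s => [|a s IH] /=; first by rewrite big1.
rewrite IH big_split /=; congr (_ + _).
case Pa: (P (f a)).
  rewrite (bigD1 (f a)) //= eqxx big1 // => x /andP[_ /negPf].
  by rewrite eq_sym => ->.
by rewrite big1 // => x Px; case: eqP => // ex; rewrite ex Px in Pa.
Qed.

Lemma perm_map_lift (A B : eqType) (f : A -> B) (s : seq B) (s' : seq A) :
  perm_eq (map f s') s -> exists t, perm_eq t s' /\ map f t = s.
Proof.
elim: s s' => [|a s IH] s' Hperm.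
  by exists [::]; case: s' Hperm => [|x s'] // /perm_size.
have : a \in map f s' by rewrite (perm_mem Hperm) mem_head.
case/mapP => x xs eq_a; subst a.
have Hrem : perm_eq (map f (rem x s')) s.
  rewrite -(perm_cons (f x)); apply: (@perm_trans _ (map f s')) => //.
  by rewrite perm_sym -map_cons; apply/perm_map/perm_to_rem.
have [t [Pt Mt]] := IH _ Hrem; exists (x :: t); split; last by rewrite /= Mt.
by apply: (@perm_trans _ (x :: rem x s')); rewrite ?perm_cons // perm_sym perm_to_rem.
Qed.

Definition replicate (V : finType) (d : V -> nat) : seq V :=
  flatten [seq nseq (d y) y | y <- enum V].

Lemma count_replicate (V : finType) (d : V -> nat) (p : pred V) :
  count p (replicate d) = \sum_(y | p y) d y.
Proof.
rewrite count_flatten -map_comp sumnE big_map big_enum /= [RHS]big_mkcond.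
by apply: eq_bigr => y _; rewrite /= count_nseq; case: (p y); rewrite ?mul1n ?mul0n.
Qed.

Lemma lift_list (U V : finType) (p : V -> U) (d : V -> nat) (s : seq U) :
  (forall u, count (pred1 u) s = \sum_(y | p y == u) d y) ->
  exists t, (forall y, count (pred1 y) t = d y) /\ map p t = s.
Proof.
move=> Hs.
have Hperm : perm_eq (map p (replicate d)) s.
  apply/allP => u _; apply/eqP; rewrite count_map Hs.
  by rewrite (@count_replicate V d (preim p (pred1 u))).
have [t [Pt Mt]] := perm_map_lift Hperm; exists t; split=> // y.
by rewrite (permP Pt) count_replicate big_pred1_eq.
Qed.

Lemma zip_map2 (A B C D : Type) (f : A -> C) (g : B -> D) s t :
  zip (map f s) (map g t) = map (fun e => (f e.1, g e.2)) (zip s t).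
Proof. by elim: s t => [|x s IH] [|y t] //=; rewrite IH. Qed.

Lemma lift_layer (U V : finType) (p : V -> U) (dout din : V -> nat) (s : seq (U * U)) :
  (forall u, count (fun e => e.1 == u) s = \sum_(y | p y == u) dout y /\
             count (fun e => e.2 == u) s = \sum_(y | p y == u) din y) ->
  exists t : seq (V * V),
    (forall y, count (fun e => e.1 == y) t = dout y /\ count (fun e => e.2 == y) t = din y)
    /\ map (fun e => (p e.1, p e.2)) t = s.
Proof.
move=> Hs.
have [to [Cto Mto]] : exists to, (forall y, count (pred1 y) to = dout y) /\ map p to = unzip1 s.
  by apply: lift_list => u; rewrite count_map; apply: (proj1 (Hs u)).
have [ti [Cti Mti]] : exists ti, (forall y, count (pred1 y) ti = din y) /\ map p ti = unzip2 s.
  by apply: lift_list => u; rewrite count_map; apply: (proj2 (Hs u)).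
have size_t : size to = size ti by rewrite -(size_map p to) -(size_map p ti) Mto Mti !size_map.
exists (zip to ti); split.
  move=> y; split.
    transitivity (count (pred1 y) (unzip1 (zip to ti))); first by rewrite count_map.
    by rewrite unzip1_zip ?size_t.
  transitivity (count (pred1 y) (unzip2 (zip to ti))); first by rewrite count_map.
  by rewrite unzip2_zip ?size_t.
by rewrite -zip_map2 Mto Mti zip_unzip.
Qed.

Lemma count_flatten_single (U : finType) (W : Type) (s : U -> seq W) (P : pred W) u :
  (forall u', u' != u -> count P (s u') = 0) ->
  count P (flatten [seq s u' | u' <- enum U]) = count P (s u).
Proof.
move=> Hothers; rewrite count_flatten -map_comp sumnE big_map big_enum /=.
by rewrite (bigD1 u) //= big1 ?addn0.
Qed.

Lemma sum_tag (U : finType) (J : U -> finType) (d : {u : U & J u} -> nat) u :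
  \sum_(y | tag y == u) d y = \sum_(k : J u) d (Tagged J k).
Proof.
have := @sig_big_dep _ 0 addn U J (fun u' => u' == u) (fun _ => xpredT)
  (fun u' k => d (Tagged J k)).
rewrite big_pred1_eq => ->.
by apply: eq_big => [[u' k]|[u' k] _] //=; rewrite andbT.
Qed.

Lemma clos_rt_map (A B : Type) (f : A -> B) (R : relation A) (R' : relation B) a b :
  (forall x y, R x y -> clos_refl_trans B R' (f x) (f y)) ->
  clos_refl_trans A R a b -> clos_refl_trans B R' (f a) (f b).
Proof.
move=> HR; elim=> [x y /HR //| x | x y z _ IH1 _ IH2]; first exact: rt_refl.
exact: rt_trans IH1 IH2.
Qed.

Lemma clos_rt_fibers (U V : Type) (p : V -> U) (R : relation V) (RU : relation U) :
  (forall y1 y2, p y1 = p y2 -> clos_refl_trans V R y1 y2) ->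
  (forall x y, RU x y -> exists z1 z2, [/\ p z1 = x, p z2 = y & R z1 z2]) ->
  forall y1 y2, clos_refl_trans U RU (p y1) (p y2) -> clos_refl_trans V R y1 y2.
Proof.
move=> Hfib Hstep.
suff Hgen u1 u2 : clos_refl_trans_1n U RU u1 u2 ->
    forall y1 y2, p y1 = u1 -> p y2 = u2 -> clos_refl_trans V R y1 y2.
  by move=> y1 y2 /clos_rt_rt1n_iff/Hgen; apply.
elim=> [u|x y z xy _ IH] y1 y2 e1 e2; first by apply: Hfib; rewrite e1 e2.
have [z1 [z2 [pz1 pz2 Rz]]] := Hstep x y xy.
apply: (@rt_trans _ _ _ z1); first by apply: Hfib; rewrite e1 pz1.
apply: (@rt_trans _ _ _ z2); first exact: rt_step.
exact: IH.
Qed.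

Definition adjacent (T : eqType) (s : seq (T * T)) : rel T :=
  fun x y => ((x, y) \in s) || ((y, x) \in s).

Definition sharing_graph_on F (S : osg -> Prop) (th : subst F) (T : finType)
  (l : T -> osg) (E : 'I_(size th) -> seq (T * T)) : Prop :=
  [/\ 0 < #|T|, (forall k, S (l k)),
      (forall (i : 'I_(size th)) (k : T),
          count (fun e => e.1 == k) (E i) = chi (l k) (Var (bvar th i) : term F) /\
          count (fun e => e.2 == k) (E i) = chi (l k) (bterm th i)) &
      (forall a b : T,
          clos_refl_trans T (fun x y => exists i : 'I_(size th), adjacent (E i) x y) a b)].
Arguments sharing_graph_on [F] S th [T] l E.

Lemma mgu_pE F S (th : subst F) B :
  mgu_p S th B <-> exists (T : finType) (l : T -> osg) E,
     sharing_graph_on S th l E /\ B = (fun v => \sum_(k : T) l k v).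
Proof.
split.
  case=> n [l [E [[n0 Sl Hdeg Hconn] ->]]]; exists 'I_n, l, E.
  by split=> //; split; rewrite ?card_ord.
case=> T [l [E [[n0 Sl Hdeg Hconn] ->]]].
pose rk (e : T * T) := (enum_rank e.1, enum_rank e.2).
exists #|T|, (fun k => l (enum_val k)), (fun i => map rk (E i)); split; last first.
  apply: functional_extensionality => v.
  by rewrite /res (big_enum_val (fun x => l x v)).
split=> //.
- move=> i k; have [Hout Hin] := Hdeg i (enum_val k).
  rewrite !count_map -Hout -Hin; split; apply: eq_count => e /=;
    by apply/eqP/eqP => [<-|->]; rewrite ?enum_rankK ?enum_valK.
- move=> a b; rewrite -(enum_valK a) -(enum_valK b); apply: clos_rt_map (Hconn _ _).
  move=> x y [i Hi]; apply: rt_step; exists i.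
  by case/orP: Hi => H; rewrite (map_f rk H) ?orbT.
Qed.

(* With no bindings a connected graph has a single node: mgu_p S [::] = S. *)
Lemma mgu_p_nil F S B : @mgu_p F S [::] B <-> S B.
Proof.
split.
  case=> n [l [E [[n0 Sl _ Hconn] ->]]].
  have single (k : 'I_n) : k = Ordinal n0.
    by elim: (Hconn k (Ordinal n0)) => [x y [[]] | | x y z _ -> _ ->].
  suff -> : res l = l (Ordinal n0) by [].
  apply: functional_extensionality => v.
  rewrite /res (bigD1 (Ordinal n0)) //= big1 ?addn0 // => k.
  by rewrite (single k) eqxx.
move=> SB; exists 1, (fun _ => B), (fun i => [::]); split.
  split=> //; first by case.
  by move=> a b; rewrite (ord1 a) (ord1 b); apply: rt_refl.
by apply: functional_extensionality => v; rewrite /res big_ord1.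
Qed.

Section Restriction.
Variables (T : finType) (A : {pred T}).

Definition restrict_edge (e : T * T) : option ({x in A} * {x in A}) :=
  if insub e.1 is Some a then (if insub e.2 is Some a' then Some (a, a') else None)
  else None.

Definition inside (s : seq (T * T)) : Prop :=
  forall e, e \in s -> (e.1 \in A) = (e.2 \in A).

Lemma restrict_edge_in x y (Ax : x \in A) (Ay : y \in A) :
  restrict_edge (x, y) = Some (Sub x Ax, Sub y Ay).
Proof. by rewrite /restrict_edge /= !insubT. Qed.

Lemma restrict_edge_val (a a' : {x in A}) : restrict_edge (val a, val a') = Some (a, a').
Proof. by rewrite /restrict_edge /= !valK. Qed.

Lemma restrict_edge_ends e (c : {x in A}) : (e.1 \in A) = (e.2 \in A) ->
  oapp (fun e' => e'.1 == c) false (restrict_edge e) = (e.1 == val c) /\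
  oapp (fun e' => e'.2 == c) false (restrict_edge e) = (e.2 == val c).
Proof.
case: e => x y /= xyA; have [Ax|nAx] := boolP (x \in A).
  have Ay : y \in A by rewrite -xyA.
  by rewrite restrict_edge_in /= -!val_eqE.
have nAy : y \notin A by rewrite -xyA.
have notc z : z \notin A -> (z == val c) = false.
  by move=> nAz; apply/negbTE; apply: contra nAz => /eqP->; apply: valP.
by rewrite /restrict_edge /= insubF ?(negbTE nAx) //; split; apply/esym/notc.
Qed.

Lemma count_restrict s (c : {x in A}) : inside s ->
  count (fun e => e.1 == c) (pmap restrict_edge s) = count (fun e => e.1 == val c) s /\
  count (fun e => e.2 == c) (pmap restrict_edge s) = count (fun e => e.2 == val c) s.
Proof.
move=> sA; rewrite !count_pmap.
by split; apply: eq_in_count => e /sA /(restrict_edge_ends c) [].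
Qed.

Lemma adjacent_inside s x y : inside s -> adjacent s x y -> (x \in A) = (y \in A).
Proof. by move=> sA /orP[/sA | /sA <-]. Qed.

Lemma connect_restrict s (a a' : {x in A}) : inside s ->
  connect (adjacent s) (val a) (val a') ->
  clos_refl_trans _ (adjacent (pmap restrict_edge s)) a a'.
Proof.
move=> sA /connectP[p]; elim: p a => [|y p IH] a /=.
  by move=> _ /val_inj->; apply: rt_refl.
case/andP=> ay yp last_p.
have Ay : y \in A by rewrite -(adjacent_inside sA ay); apply: valP.
apply: (@rt_trans _ _ _ (Sub y Ay)); last exact: IH.
apply: rt_step; rewrite /adjacent !mem_pmap -!restrict_edge_val SubK.
by case/orP: ay => H; rewrite (map_f _ H) ?orbT.
Qed.
End Restriction.

Lemma binding_single F (b : nat * term F) (i : 'I_(size [:: b])) :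
  nth (0, Var 0) [:: b] i = b.
Proof. by case: i => [[|m] Hm]. Qed.

Section Collapse.
Variables (F : Type) (S : osg -> Prop) (b : nat * term F) (th : subst F).
Variables (T : finType) (l : T -> osg) (E : 'I_(size (b :: th)) -> seq (T * T)).
Hypothesis graph : sharing_graph_on S (b :: th) l E.

Let adj0 := adjacent (E ord0).

Let sym0 : connect_sym adj0.
Proof. by apply: sym_connect_sym => x y; rewrite /adj0 /adjacent orbC. Qed.

(* The connected components of the first layer, represented by their roots. *)
Definition component := {x : T | root adj0 x == x}.

Definition comp_of (x : T) : component := exist _ (root adj0 x) (roots_root sym0 x).

Lemma comp_ofK (r : component) : comp_of (val r) = r.
Proof. by apply: val_inj => /=; apply/eqP; apply: (valP r). Qed.

Lemma comp_of_connect x y : (comp_of x == comp_of y) = connect adj0 x y.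
Proof. by rewrite -val_eqE /= root_connect. Qed.

Lemma comp_of_adj x y : adj0 x y -> comp_of x = comp_of y.
Proof. by move=> xy; apply/eqP; rewrite comp_of_connect connect1. Qed.

Definition comp_group (r : component) : osg := fun v => \sum_(x | comp_of x == r) l x v.

Definition quotient_layer (i : 'I_(size th)) : seq (component * component) :=
  map (fun e => (comp_of e.1, comp_of e.2)) (E (lift ord0 i)).

Lemma comp_group_mgu (r : component) : mgu_p S [:: b] (comp_group r).
Proof.
have [n0 Sl Hdeg Hconn] := graph.
pose A : {pred T} := [pred x | comp_of x == r].
have inside0 : inside A (E ord0).
  by move=> [x y] xy; rewrite !inE (@comp_of_adj x y) // /adj0 /adjacent xy.
apply/mgu_pE; exists {x in A}, (fun c => l (val c)), (fun _ => pmap (restrict_edge A) (E ord0)).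
split; last first.
  by apply: functional_extensionality => v; rewrite /comp_group -(big_sub A (fun x => l x v)).
split=> //.
- have Ar : val r \in A by rewrite inE comp_ofK.
  by apply/card_gt0P; exists (Sub (val r) Ar).
- move=> i c; rewrite /bvar /bterm binding_single.
  have [-> ->] := count_restrict c inside0.
  exact: Hdeg ord0 (val c).
- move=> a a'; apply: (@clos_rt_map _ _ id _ _ _ _ _ (connect_restrict inside0 _)).
    by move=> x y xy; apply: rt_step; exists ord0.
  rewrite -comp_of_connect; apply/eqP.
  by rewrite (eqP (valP a)) (eqP (valP a')).
Qed.

Lemma quotient_graph : sharing_graph_on (mgu_p S [:: b]) th comp_group quotient_layer.
Proof.
have [n0 Sl Hdeg Hconn] := graph.
split.
- by case/card_gt0P: n0 => x _; apply/card_gt0P; exists (comp_of x).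
- exact: comp_group_mgu.
- move=> i r; rewrite /quotient_layer !count_map.
  rewrite (count_fibers (fun e : T * T => e.1) (fun x => comp_of x == r)).
  rewrite (count_fibers (fun e : T * T => e.2) (fun x => comp_of x == r)).
  rewrite /comp_group !chi_sum; split; apply: eq_bigr => x _;
    by have [Hout Hin] := Hdeg (lift ord0 i) x; rewrite ?Hout ?Hin /bvar /bterm lift0.
- move=> a a'; rewrite -(comp_ofK a) -(comp_ofK a'); apply: clos_rt_map (Hconn _ _).
  move=> x y [i]; case: (unliftP ord0 i) => [j ->|-> /comp_of_adj-> //]; last exact: rt_refl.
  move=> xy; apply: rt_step; exists j.
  by case/orP: xy => H; rewrite /adjacent (map_f (fun e => (comp_of e.1, comp_of e.2)) H) ?orbT.
Qed.

Lemma mgu_p_collapse : mgu_p (mgu_p S [:: b]) th (fun v => \sum_(x : T) l x v).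
Proof.
apply/mgu_pE; exists component, comp_group, quotient_layer; split; first exact: quotient_graph.
by apply: functional_extensionality => v; rewrite (partition_big comp_of xpredT).
Qed.
End Collapse.

Lemma choose_graphs F S (b : nat * term F) (U : Type) (L : U -> osg) :
  (forall u, mgu_p S [:: b] (L u)) ->
  exists (nn : U -> nat) (ll : forall u, 'I_(nn u) -> osg)
         (EE : forall u, 'I_(size [:: b]) -> seq ('I_(nn u) * 'I_(nn u))),
    forall u, @sharing_graph F S [:: b] (nn u) (ll u) (EE u) /\ L u = res (ll u).
Proof.
move=> HL.
pose graph := {n : nat & {l : 'I_n -> osg & 'I_(size [:: b]) -> seq ('I_n * 'I_n)}}.
pose good u (G : graph) :=
  @sharing_graph F S [:: b] _ (projT1 (projT2 G)) (projT2 (projT2 G)) /\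
  L u = res (projT1 (projT2 G)).
have [G HG] : exists G : U -> graph, forall u, good u (G u).
  apply: functional_choice => u; have [n [l [E HE]]] := HL u.
  by exists (existT _ n (existT _ l E)).
by exists (fun u => projT1 (G u)), (fun u => projT1 (projT2 (G u))),
  (fun u => projT2 (projT2 (G u))).
Qed.

Section Expand.
Variables (F : Type) (S : osg -> Prop) (b : nat * term F) (th : subst F).
Variables (U : finType) (L : U -> osg) (EH : 'I_(size th) -> seq (U * U)).
Hypothesis graph : sharing_graph_on (mgu_p S [:: b]) th L EH.
Variables (nn : U -> nat) (ll : forall u, 'I_(nn u) -> osg).
Variable EE : forall u, 'I_(size [:: b]) -> seq ('I_(nn u) * 'I_(nn u)).
Arguments ll : clear implicits.
Arguments EE : clear implicits.
Hypothesis inner : forall u, @sharing_graph F S [:: b] (nn u) (ll u) (EE u) /\ L u = res (ll u).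

Definition node := {u : U & 'I_(nn u)}.
Definition node_group (y : node) : osg := ll (tag y) (tagged y).
Definition in_node {u} (k : 'I_(nn u)) : node := Tagged (fun u => 'I_(nn u)) k.

Definition first_layer : seq (node * node) :=
  flatten [seq map (fun e => (in_node e.1, in_node e.2)) (EE u ord0) | u <- enum U].

Lemma mem_first_layer u e : e \in EE u ord0 -> (in_node e.1, in_node e.2) \in first_layer.
Proof.
move=> He; apply/flattenP; exists (map (fun e => (in_node e.1, in_node e.2)) (EE u ord0)).
  by rewrite (map_f (fun u => map (fun e => (in_node e.1, in_node e.2)) (EE u ord0))) ?mem_enum.
exact: (map_f (fun e => (in_node e.1, in_node e.2))).
Qed.

Lemma first_layer_degree (y : node) :
  count (fun e => e.1 == y) first_layer = chi (node_group y) (Var b.1 : term F) /\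
  count (fun e => e.2 == y) first_layer = chi (node_group y) b.2.
Proof.
case: y => u k; have [[_ _ Hdeg _] _] := inner u; have [Hout Hin] := Hdeg ord0 k.
have no_contribution (P : pred (node * node)) u' :
    (forall e : 'I_(nn u') * 'I_(nn u'), P (in_node e.1, in_node e.2) -> u' = u) ->
    u' != u -> count P (map (fun e => (in_node e.1, in_node e.2)) (EE u' ord0)) = 0.
  move=> HP neq; rewrite count_map; apply/eqP; rewrite -leqn0 leqNgt -has_count.
  by apply/hasP => -[e _ /HP eq_u]; rewrite eq_u eqxx in neq.
rewrite !(count_flatten_single (u := u)) ?count_map.
- by split; [rewrite -Hout | rewrite -Hin]; apply: eq_count => e /=; apply: eq_Tagged.
- by move=> u'; apply: no_contribution => e /eqP/(congr1 tag).
- by move=> u'; apply: no_contribution => e /eqP/(congr1 tag).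
Qed.

Lemma fiber_chi u (t : term F) : chi (L u) t = \sum_(y | tag y == u) chi (node_group y) t.
Proof. by rewrite (proj2 (inner u)) /res chi_sum sum_tag. Qed.

Definition lifts (j : 'I_(size th)) (t : seq (node * node)) : Prop :=
  (forall y, count (fun e => e.1 == y) t = chi (node_group y) (Var (bvar th j) : term F) /\
             count (fun e => e.2 == y) t = chi (node_group y) (bterm th j)) /\
  map (fun e => (tag e.1, tag e.2)) t = EH j.

(* Lifting is possible since degrees of groups are sums over their nodes. *)
Lemma lifts_exist : exists Elift, forall j, lifts j (Elift j).
Proof.
have [_ _ Hdeg _] := graph.
apply: functional_choice => j; apply: lift_layer => u.
by rewrite -!fiber_chi; apply: Hdeg.
Qed.

Variable Elift : 'I_(size th) -> seq (node * node).
Hypothesis Elift_lifts : forall j, lifts j (Elift j).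

Definition expanded_layer (i : 'I_(size (b :: th))) : seq (node * node) :=
  if unlift ord0 i is Some j then Elift j else first_layer.

(* Connected: inside each group through its own graph, and between groups
   through the lifted edges. *)
Lemma expanded_connected (a a' : node) :
  clos_refl_trans node (fun x y => exists i, adjacent (expanded_layer i) x y) a a'.
Proof.
have [_ _ _ Hconn] := graph.
apply: (clos_rt_fibers (p := tag)); last exact: Hconn.
  move=> [u k] [u' k'] /= eq_u; subst u'.
  have [[_ _ _ Hinner] _] := inner u.
  apply: (clos_rt_map (f := in_node) _ (Hinner k k')) => x y [i].
  rewrite (ord1 i) => xy; apply: rt_step; exists ord0.
  rewrite /expanded_layer unlift_none /adjacent.
  by case/orP: xy => /mem_first_layer ->; rewrite ?orbT.
move=> x y [j]; rewrite /adjacent -(proj2 (Elift_lifts j)).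
case/orP=> /mapP[[z1 z2] Hz [-> ->]]; [exists z1, z2 | exists z2, z1];
  by split=> //; exists (lift ord0 j); rewrite /expanded_layer liftK /adjacent Hz ?orbT.
Qed.

Lemma expanded_graph : sharing_graph_on S (b :: th) node_group expanded_layer.
Proof.
have [n0 _ _ _] := graph.
split.
- case/card_gt0P: n0 => u _; have [[nu0 _ _ _] _] := inner u.
  by apply/card_gt0P; exists (in_node (Ordinal nu0)).
- by move=> [u k]; have [[_ Sl _ _] _] := inner u; apply: Sl.
- move=> i y; case: (unliftP ord0 i) => [j ->|->].
    by rewrite /expanded_layer liftK /bvar /bterm lift0; apply: (proj1 (Elift_lifts j)).
  by rewrite /expanded_layer unlift_none; apply: first_layer_degree.
- exact: expanded_connected.
Qed.

Lemma sum_node_groups : (fun v => \sum_(u : U) L u v) = (fun v => \sum_(y : node) node_group y v).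
Proof.
apply: functional_extensionality => v.
rewrite (eq_bigr (fun u => \sum_(k < nn u) ll u k v)); last first.
  by move=> u _; rewrite (proj2 (inner u)).
by rewrite (sig_big_dep xpredT (fun _ => xpredT) (fun u k => ll u k v)); apply: eq_bigl.
Qed.
End Expand.

Lemma mgu_p_cons F S (b : nat * term F) th B :
  mgu_p S (b :: th) B <-> mgu_p (mgu_p S [:: b]) th B.
Proof.
split; first by case/mgu_pE => T [l [E [Hg ->]]]; apply: mgu_p_collapse Hg.
case/mgu_pE => U [L [EH [Hg ->]]].
have [_ HL _ _] := Hg.
have [nn [ll [EE inner]]] := choose_graphs HL.
have [Elift HElift] := lifts_exist Hg inner.
apply/mgu_pE; exists (node nn), (node_group ll), (expanded_layer EE Elift); split.
  exact: (expanded_graph Hg inner HElift).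
exact: sum_node_groups inner.
Qed.

Theorem theorem1 (F : Type) (ar : F -> nat) (S : osg -> Prop) (th : subst F) :
  (forall B, S B -> fin_supp B) ->
  all (fun b => wf_term ar b.2) th ->
  idempotent_subst th ->
  forall B : osg, mgu_omega S th B <-> mgu_p S th B.
Proof.
move=> _ _ _; elim: th S => [|b th IH] S B /=; first by rewrite mgu_p_nil.
by rewrite IH mgu_p_cons.
Qed.
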